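(* Let $n\ge 1$ and let $L_1,L_2,\underline{b}$ be positive constants. Assume that $(k_p,k_d)\in(0,\infty)\times(0,\infty)$ satisfies $k_p^2>\bar k$ and $k_d^2>k_p/\underline{b}+\bar k$, where $\bar k=(L_1+L_2)(k_p+k_d)/\underline{b}$. Then the $2n\times 2n$ matrix $$P=\begin{bmatrix} 2k_pk_d\underline{b}I_n & k_pI_n\\ k_pI_n & k_dI_n\end{bmatrix}$$ is positive definite. Moreover, for $$A=\begin{bmatrix}0_n & I_n\\ a-k_p\theta & b-k_d\theta\end{bmatrix},$$ where $a,b,\theta$ are $n\times n$ constant matrices satisfying $\|a\|\le L_1$, $\|b\|\le L_2$ and $(\theta+\theta^{\mathsf{T}})/2\ge \underline{b}I_n>0$, there exists $\beta>0$ depending only on $(k_p,k_d,L_1,L_2,\underline{b})$ such that $PA+A^{\mathsf{T}}P\le -\beta I_{2n}$ for all such $a,b,\theta$.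
   Context: Here $I_n$ and $0_n$ are the $n\times n$ identity and zero matrices, $\|\cdot\|$ is the induced Euclidean (operator) norm of a matrix, and for symmetric matrices $S_1\ge S_2$ (resp. $S_1>S_2$) means $S_1-S_2$ is positive semi-definite (resp. positive definite). *)

From HB Require Import structures.
From mathcomp Require Import all_boot all_order all_algebra.
From mathcomp Require Import boolp classical_sets reals.
Set Implicit Arguments. Unset Strict Implicit. Unset Printing Implicit Defensive.
Import Order.TTheory GRing.Theory Num.Theory.
Local Open Scope ring_scope.
Local Open Scope classical_set_scope.

Definition vnorm (R : realType) (m : nat) (x : 'cV[R]_m) : R :=
  Num.sqrt (\sum_(i < m) x i 0 ^+ 2).

Definition opnorm (R : realType) (m : nat) (A : 'M[R]_m) : R :=
  sup [set vnorm (A *m x) | x in [set x : 'cV[R]_m | vnorm x <= 1]].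

Definition qform (R : realType) (m : nat) (S : 'M[R]_m) (x : 'cV[R]_m) : R :=
  (x^T *m S *m x) 0 0.

Definition psd (R : realType) (m : nat) (S : 'M[R]_m) : Prop :=
  forall x : 'cV[R]_m, 0 <= qform S x.

Definition posdef (R : realType) (m : nat) (S : 'M[R]_m) : Prop :=
  forall x : 'cV[R]_m, x != 0 -> 0 < qform S x.

Definition mxle (R : realType) (m : nat) (S1 S2 : 'M[R]_m) : Prop :=
  psd (S2 - S1).

Definition kbar (R : realType) (L1 L2 bl kp kd : R) : R :=
  (L1 + L2) * (kp + kd) / bl.

Definition Pmx (R : realType) (n : nat) (bl kp kd : R) : 'M[R]_(n + n) :=
  block_mx ((2 * kp * kd * bl) *: (1%:M : 'M[R]_n)) (kp *: 1%:M)
           (kp *: 1%:M) (kd *: 1%:M).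

Definition Amx (R : realType) (n : nat) (kp kd : R) (a b theta : 'M[R]_n)
  : 'M[R]_(n + n) :=
  block_mx 0 1%:M (a - kp *: theta) (b - kd *: theta).

(* With w = kp u + kd v, the form of P A + A^T P on (u, v) equals
   2 (2 kp kd bl <u,v> + kp |v|^2 + <w, a u + b v> - <w, theta w>).
   The coercivity of theta gives <w, theta w> >= bl |w|^2, whose cross term
   cancels 2 kp kd bl <u,v> exactly: this is why P has that corner entry.
   What remains is kp |v|^2 - bl (kp^2 |u|^2 + kd^2 |v|^2) plus terms that
   the norm bounds on a and b control by (L1 + L2)(kp + kd)(|u|^2 + |v|^2),
   and the hypotheses on kp and kd make both diagonal coefficients negative.
   Positivity of P is the 2x2 criterion 2 kp kd bl * kd > kp^2. *)

From mathcomp Require Import all_boot all_order all_algebra.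
From mathcomp Require Import reals.
From mathcomp Require Import ring lra.
Import Order.TTheory GRing.Theory Num.Theory.
Set Implicit Arguments. Unset Strict Implicit.
Local Open Scope ring_scope.

Section DotProduct.
Variable R : realType.

Definition dotmx (m : nat) (u v : 'cV[R]_m) : R := (u^T *m v) 0 0.

Lemma dotmxE m (u v : 'cV[R]_m) : dotmx u v = \sum_i u i 0 * v i 0.
Proof. by rewrite /dotmx mxE; apply: eq_bigr => i _; rewrite mxE. Qed.

Lemma dotmxC m (u v : 'cV[R]_m) : dotmx u v = dotmx v u.
Proof. by rewrite !dotmxE; apply: eq_bigr => i _; exact: mulrC. Qed.

Lemma dotmxDr m (u v1 v2 : 'cV[R]_m) :
  dotmx u (v1 + v2) = dotmx u v1 + dotmx u v2.
Proof. by rewrite /dotmx mulmxDr mxE. Qed.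

Lemma dotmxDl m (u1 u2 v : 'cV[R]_m) :
  dotmx (u1 + u2) v = dotmx u1 v + dotmx u2 v.
Proof. by rewrite dotmxC dotmxDr !(dotmxC v). Qed.

Lemma dotmxZr m c (u v : 'cV[R]_m) : dotmx u (c *: v) = c * dotmx u v.
Proof. by rewrite /dotmx -scalemxAr mxE. Qed.

Lemma dotmxZl m c (u v : 'cV[R]_m) : dotmx (c *: u) v = c * dotmx u v.
Proof. by rewrite dotmxC dotmxZr dotmxC. Qed.

Lemma dotmxNr m (u v : 'cV[R]_m) : dotmx u (- v) = - dotmx u v.
Proof. by rewrite -scaleN1r dotmxZr mulN1r. Qed.

Lemma dotmxBr m (u v1 v2 : 'cV[R]_m) :
  dotmx u (v1 - v2) = dotmx u v1 - dotmx u v2.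
Proof. by rewrite dotmxDr dotmxNr. Qed.

Lemma dotmxBl m (u1 u2 v : 'cV[R]_m) :
  dotmx (u1 - u2) v = dotmx u1 v - dotmx u2 v.
Proof. by rewrite dotmxC dotmxBr !(dotmxC v). Qed.

Lemma dotmx0r m (u : 'cV[R]_m) : dotmx u 0 = 0.
Proof. by rewrite /dotmx mulmx0 mxE. Qed.

Lemma dotmx_ge0 m (u : 'cV[R]_m) : 0 <= dotmx u u.
Proof. by rewrite dotmxE; apply: sumr_ge0 => i _; rewrite -expr2 sqr_ge0. Qed.

Lemma dotmx_eq0 m (u : 'cV[R]_m) : (dotmx u u == 0) = (u == 0).
Proof.
apply/idP/eqP => [|->]; last by rewrite dotmx0r.
rewrite dotmxE psumr_eq0 => [/allP u0|i _]; last by rewrite -expr2 sqr_ge0.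
apply/matrixP => i j; rewrite (ord1 j) !mxE.
by have /implyP/(_ isT) := u0 i (mem_index_enum i); rewrite mulf_eq0 orbb => /eqP.
Qed.

Lemma dotmx_gt0 m (u : 'cV[R]_m) : u != 0 -> 0 < dotmx u u.
Proof. by rewrite lt_def dotmx_eq0 dotmx_ge0 andbT. Qed.

Lemma dotmx_col m1 m2 (u u' : 'cV[R]_m1) (v v' : 'cV[R]_m2) :
  dotmx (col_mx u v) (col_mx u' v') = dotmx u u' + dotmx v v'.
Proof. by rewrite /dotmx tr_col_mx mul_row_col mxE. Qed.

Lemma dotmx_trmx m (S : 'M[R]_m) u v : dotmx u (S^T *m v) = dotmx (S *m u) v.
Proof. by rewrite /dotmx mulmxA -trmx_mul. Qed.

Lemma qformE m (S : 'M[R]_m) x : qform S x = dotmx x (S *m x).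
Proof. by rewrite /qform /dotmx mulmxA. Qed.

Lemma qformD m (S T : 'M[R]_m) x : qform (S + T) x = qform S x + qform T x.
Proof. by rewrite !qformE mulmxDl dotmxDr. Qed.

Lemma qformN m (S : 'M[R]_m) x : qform (- S) x = - qform S x.
Proof. by rewrite !qformE mulNmx dotmxNr. Qed.

Lemma qformZ m c (S : 'M[R]_m) x : qform (c *: S) x = c * qform S x.
Proof. by rewrite !qformE -scalemxAl dotmxZr. Qed.

Lemma qform1 m x : qform (1%:M : 'M[R]_m) x = dotmx x x.
Proof. by rewrite qformE mul1mx. Qed.

Lemma qform_trmx m (S : 'M[R]_m) x : qform S^T x = qform S x.
Proof. by rewrite !qformE dotmx_trmx dotmxC. Qed.

Lemma qform_mulmx_sym m (S T : 'M[R]_m) x : S^T = S ->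
  qform (S *m T + T^T *m S) x = 2 * dotmx (S *m x) (T *m x).
Proof.
move=> Ssym; rewrite qformD !qformE -!mulmxA dotmx_trmx.
by rewrite -{1}Ssym dotmx_trmx dotmxC mulr2n mulrDl mul1r.
Qed.

Lemma mxle_coercive n (c : R) (S : 'M[R]_n) :
  mxle (c *: 1%:M) (2^-1 *: (S + S^T)) -> forall w, c * dotmx w w <= dotmx w (S *m w).
Proof.
move=> S_ge w; have := S_ge w.
rewrite qformD qformN !qformZ qformD qform_trmx qform1 qformE subr_ge0.
lra.
Qed.

Lemma mxle_opp_scalar n (beta : R) (M : 'M[R]_n) :
  (forall x, qform M x <= - (beta * dotmx x x)) -> mxle M (- (beta *: 1%:M)).
Proof. by move=> M_le x; rewrite qformD !qformN qformZ qform1 subr_ge0 M_le. Qed.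

Lemma vnorm_sqr m (x : 'cV[R]_m) : vnorm x ^+ 2 = dotmx x x.
Proof.
rewrite /vnorm sqr_sqrtr; last by apply: sumr_ge0 => i _; exact: sqr_ge0.
by rewrite dotmxE; apply: eq_bigr => i _; rewrite expr2.
Qed.

End DotProduct.

Section OperatorNorm.
Variable R : realType.

Lemma vnorm_ge0 m (x : 'cV[R]_m) : 0 <= vnorm x.
Proof. exact: sqrtr_ge0. Qed.

Lemma vnorm0 m : vnorm (0 : 'cV[R]_m) = 0.
Proof. by rewrite /vnorm big1 ?sqrtr0 // => i _; rewrite mxE expr0n. Qed.

Lemma vnorm_gt0 m (x : 'cV[R]_m) : x != 0 -> 0 < vnorm x.
Proof.
move=> /dotmx_gt0; rewrite -vnorm_sqr [0 < vnorm _]lt_def vnorm_ge0 andbT.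
by apply: contraTneq => ->; rewrite expr0n ltxx.
Qed.

Lemma vnormZ m c (x : 'cV[R]_m) : vnorm (c *: x) = `|c| * vnorm x.
Proof.
rewrite /vnorm -sqrtr_sqr -sqrtrM ?sqr_ge0 // mulr_sumr.
by congr Num.sqrt; apply: eq_bigr => i _; rewrite mxE exprMn.
Qed.

Lemma coord_le_vnorm m (x : 'cV[R]_m) i : `|x i 0| <= vnorm x.
Proof.
rewrite -sqrtr_sqr ler_sqrt; last by apply: sumr_ge0 => j _; exact: sqr_ge0.
by rewrite (bigD1 i) //= lerDl; apply: sumr_ge0 => j _; exact: sqr_ge0.
Qed.

Lemma opnorm_ub m (A : 'M[R]_m) x : vnorm x <= 1 -> vnorm (A *m x) <= opnorm A.
Proof.
move=> x1; apply: sup_upper_bound; last by exists x.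
split; first by exists (vnorm (A *m x)), x.
exists (Num.sqrt (\sum_i (\sum_j `|A i j|) ^+ 2)) => _ [y /= y1 <-].
rewrite ler_sqrt; last by apply: sumr_ge0 => i _; exact: sqr_ge0.
apply: ler_sum => i _.
rewrite -real_normK ?num_real // lerXn2r ?nnegrE ?sumr_ge0 //.
rewrite mxE; apply: le_trans (ler_norm_sum _ _ _) _; apply: ler_sum => j _.
by rewrite normrM ler_piMr // (le_trans (coord_le_vnorm _ _)).
Qed.

Lemma vnorm_mulmx_le m (A : 'M[R]_m) x : vnorm (A *m x) <= opnorm A * vnorm x.
Proof.
have [->|x0] := eqVneq x 0; first by rewrite mulmx0 vnorm0 mulr0.
have N0 := vnorm_gt0 x0.
have unit_x : vnorm ((vnorm x)^-1 *: x) <= 1.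
  by rewrite vnormZ ger0_norm ?invr_ge0 ?vnorm_ge0 // mulVf ?gt_eqF.
have := opnorm_ub A unit_x.
by rewrite -scalemxAr vnormZ ger0_norm ?invr_ge0 ?vnorm_ge0 // ler_pdivrMl // mulrC.
Qed.

Lemma dotmx_mulmx_le m (A : 'M[R]_m) L u v : 0 < L -> opnorm A <= L ->
  2 * dotmx u (A *m v) <= L * (dotmx u u + dotmx v v).
Proof.
move=> L0 AL.
have Av_le : dotmx (A *m v) (A *m v) <= L ^+ 2 * dotmx v v.
  rewrite -!vnorm_sqr -exprMn; apply: lerXn2r;
    rewrite ?nnegrE ?mulr_ge0 ?vnorm_ge0 ?(ltW L0) //.
  by apply: (le_trans (vnorm_mulmx_le A v)); rewrite ler_wpM2r ?vnorm_ge0.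
have := dotmx_ge0 (L *: u - A *m v).
rewrite !(dotmxBl, dotmxBr, dotmxZl, dotmxZr) (dotmxC (A *m v) u) => sq_ge0.
rewrite -(ler_pM2l L0); nra.
Qed.

End OperatorNorm.

Section ScalarBlocks.
Variables (R : realType) (n : nat).

Definition scalar_block (al ga de : R) : 'M[R]_(n + n) :=
  block_mx (al *: 1%:M) (ga *: 1%:M) (ga *: 1%:M) (de *: 1%:M).

Lemma scalar_block_sym al ga de : (scalar_block al ga de)^T = scalar_block al ga de.
Proof. by rewrite /scalar_block tr_block_mx !scalemx1 !tr_scalar_mx. Qed.

Lemma scalar_block_mul_col al ga de (u v : 'cV[R]_n) :
  scalar_block al ga de *m col_mx u v = col_mx (al *: u + ga *: v) (ga *: u + de *: v).
Proof. by rewrite mul_block_col !scalemx1 !mul_scalar_mx. Qed.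

Lemma qform_scalar_block al ga de (u v : 'cV[R]_n) :
  qform (scalar_block al ga de) (col_mx u v) =
  al * dotmx u u + 2 * ga * dotmx u v + de * dotmx v v.
Proof.
rewrite qformE scalar_block_mul_col dotmx_col !(dotmxDr, dotmxZr) (dotmxC v u).
ring.
Qed.

Lemma posdef_scalar_block al ga de :
  0 < al -> ga ^+ 2 < al * de -> posdef (scalar_block al ga de).
Proof.
move=> al_gt0 det_gt0 x; rewrite -[x]vsubmxK qform_scalar_block.
set u := usubmx x; set v := dsubmx x.
have [->|v0 _] := eqVneq v 0.
  rewrite col_mx_eq0 eqxx andbT => /dotmx_gt0 u_gt0.
  by rewrite !dotmx0r !mulr0 !addr0 mulr_gt0.
have := dotmx_ge0 (al *: u + ga *: v); have := dotmx_gt0 v0.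
rewrite !(dotmxDl, dotmxDr, dotmxZl, dotmxZr) (dotmxC v u) => V_gt0 sq_ge0.
rewrite -(pmulr_rgt0 _ al_gt0); nra.
Qed.

End ScalarBlocks.

Section Lyapunov.
Variables (R : realType) (L1 L2 bl kp kd : R).

Lemma Pmx_posdef n : 0 < bl -> 0 < kp -> 0 < kd -> kp < bl * kd ^+ 2 ->
  posdef (Pmx n bl kp kd).
Proof.
move=> bl_gt0 kp_gt0 kd_gt0 kp_lt; apply: posdef_scalar_block.
  by rewrite !mulr_gt0.
have -> : 2 * kp * kd * bl * kd = kp * (2 * (bl * kd ^+ 2)) by ring.
by rewrite expr2 ltr_pM2l //; lra.
Qed.

Lemma Amx_mul_col n (a b theta : 'M[R]_n) (u v : 'cV[R]_n) :
  Amx kp kd a b theta *m col_mx u v =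
  col_mx v (a *m u + b *m v - theta *m (kp *: u + kd *: v)).
Proof.
rewrite /Amx mul_block_col mul0mx mul1mx add0r !mulmxBl mulmxDr -!scalemxAl.
by rewrite -!scalemxAr addrACA opprD.
Qed.

Lemma dotmx_Pmx_Amx n (a b theta : 'M[R]_n) (u v : 'cV[R]_n) :
  let x := col_mx u v in let w := kp *: u + kd *: v in
  dotmx (Pmx n bl kp kd *m x) (Amx kp kd a b theta *m x) =
  2 * kp * kd * bl * dotmx u v + kp * dotmx v v
  + dotmx w (a *m u + b *m v) - dotmx w (theta *m w).
Proof.
rewrite /= Amx_mul_col [Pmx _ _ _ _]/= scalar_block_mul_col dotmx_col.
by rewrite dotmxBr dotmxDl !dotmxZl addrA.
Qed.

Definition margin_u : R := 2 * bl * kp ^+ 2 - 2 * L1 * kp - (kp * L2 + kd * L1).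
Definition margin_v : R :=
  2 * bl * kd ^+ 2 - 2 * kp - 2 * kd * L2 - (kp * L2 + kd * L1).

Lemma qform_lyap_le n (a b theta : 'M[R]_n) (u v : 'cV[R]_n) :
  0 < L1 -> 0 < L2 -> 0 <= kp -> 0 <= kd ->
  opnorm a <= L1 -> opnorm b <= L2 ->
  mxle (bl *: 1%:M) (2^-1 *: (theta + theta^T)) ->
  qform (Pmx n bl kp kd *m Amx kp kd a b theta
         + (Amx kp kd a b theta)^T *m Pmx n bl kp kd) (col_mx u v) <=
  - (margin_u * dotmx u u + margin_v * dotmx v v).
Proof.
move=> L1_gt0 L2_gt0 kp_ge0 kd_ge0 a_le b_le /mxle_coercive theta_ge.
rewrite qform_mulmx_sym ?scalar_block_sym // dotmx_Pmx_Amx.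
set w := kp *: u + kd *: v.
have ww : dotmx w w =
    kp ^+ 2 * dotmx u u + 2 * kp * kd * dotmx u v + kd ^+ 2 * dotmx v v.
  by rewrite /w !(dotmxDl, dotmxDr, dotmxZl, dotmxZr) (dotmxC v u); ring.
have wab : 2 * dotmx w (a *m u + b *m v) <=
    (2 * kp * L1 + kp * L2 + kd * L1) * dotmx u u
    + (kp * L2 + kd * L1 + 2 * kd * L2) * dotmx v v.
  have uau := ler_wpM2l kp_ge0 (dotmx_mulmx_le u u L1_gt0 a_le).
  have ubv := ler_wpM2l kp_ge0 (dotmx_mulmx_le u v L2_gt0 b_le).
  have vau := ler_wpM2l kd_ge0 (dotmx_mulmx_le v u L1_gt0 a_le).
  have vbv := ler_wpM2l kd_ge0 (dotmx_mulmx_le v v L2_gt0 b_le).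
  rewrite /w !(dotmxDl, dotmxDr, dotmxZl); lra.
have := theta_ge w; rewrite ww /margin_u /margin_v; lra.
Qed.

Lemma margins_gt0 : 0 < L1 -> 0 < L2 -> 0 < bl -> 0 < kp -> 0 < kd ->
  kbar L1 L2 bl kp kd < kp ^+ 2 -> kp / bl + kbar L1 L2 bl kp kd < kd ^+ 2 ->
  0 < margin_u /\ 0 < margin_v.
Proof.
move=> L1_gt0 L2_gt0 bl_gt0 kp_gt0 kd_gt0.
rewrite -[_ < kp ^+ 2](ltr_pM2r bl_gt0) -[_ < kd ^+ 2](ltr_pM2r bl_gt0).
rewrite mulrDl /kbar !divfK ?gt_eqF // => kp_big kd_big.
have := mulr_gt0 L1_gt0 kp_gt0; have := mulr_gt0 L1_gt0 kd_gt0.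
have := mulr_gt0 L2_gt0 kp_gt0; have := mulr_gt0 L2_gt0 kd_gt0.
rewrite /margin_u /margin_v; split; lra.
Qed.

End Lyapunov.

Theorem proposition4p3 (R : realType) (L1 L2 bl kp kd : R) :
  0 < L1 -> 0 < L2 -> 0 < bl -> 0 < kp -> 0 < kd ->
  kbar L1 L2 bl kp kd < kp ^+ 2 ->
  kp / bl + kbar L1 L2 bl kp kd < kd ^+ 2 ->
  (forall n : nat, (1 <= n)%N -> posdef (Pmx n bl kp kd)) /\
  exists beta : R, 0 < beta /\
    forall (n : nat) (a b theta : 'M[R]_n), (1 <= n)%N ->
      opnorm a <= L1 -> opnorm b <= L2 ->
      mxle (bl *: (1%:M : 'M[R]_n)) (2^-1 *: (theta + theta^T)) ->
      mxle (Pmx n bl kp kd *m Amx kp kd a b theta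
            + (Amx kp kd a b theta)^T *m Pmx n bl kp kd)
           (- (beta *: (1%:M : 'M[R]_(n + n)))).
Proof.
move=> L1_gt0 L2_gt0 bl_gt0 kp_gt0 kd_gt0 kp_big kd_big.
have kbar_gt0 : 0 < kbar L1 L2 bl kp kd by rewrite divr_gt0 ?mulr_gt0 ?addr_gt0.
split=> [n _|].
  apply: Pmx_posdef => //; rewrite mulrC -ltr_pdivrMr //; lra.
have [mu_gt0 mv_gt0] := margins_gt0 L1_gt0 L2_gt0 bl_gt0 kp_gt0 kd_gt0 kp_big kd_big.
exists (Num.min (margin_u L1 L2 bl kp kd) (margin_v L1 L2 bl kp kd)).
split=> [|n a b theta _ a_le b_le theta_ge]; first by rewrite lt_min mu_gt0.
apply: mxle_opp_scalar => x; rewrite -[x]vsubmxK dotmx_col.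
have kp_ge0 := ltW kp_gt0; have kd_ge0 := ltW kd_gt0.
apply: le_trans (qform_lyap_le _ _ L1_gt0 L2_gt0 kp_ge0 kd_ge0 a_le b_le theta_ge) _.
rewrite lerN2 mulrDr lerD // ler_wpM2r ?dotmx_ge0 // ge_min lexx ?orbT //.
Qed.
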